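(* Let $p$ be a prime and $k$ a field of characteristic $p$. For any $x,y\in X$ and any monomials $u_1,\ldots,u_p$ of $k_0\langle X\rangle$, the coefficient of $(xy)^p$ in $S_p(u_1,\ldots,u_p)$ plus the coefficient of $(yx)^p$ in $S_p(u_1,\ldots,u_p)$ equals $0$.
   Context: $k_0\langle X\rangle$ is the free associative $k$-algebra (without identity) on a countably infinite set $X$; its monomials are the nonempty words in $X$, which form a $k$-basis. $S_p(v_1,\ldots,v_p)=\sum_{\sigma\in\Sigma_p}\prod_{i=1}^p v_{\sigma(i)}$, with $\Sigma_p$ the symmetric group on $p$ letters. *)

From mathcomp Require Import all_boot all_order all_algebra all_fingroup.
Set Implicit Arguments. Unset Strict Implicit. Unset Printing Implicit Defensive.
Import GRing.Theory.
Local Open Scope ring_scope.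

(* The countably infinite alphabet X is nat; a word (monomial of k_0<X>) is a
   nonempty seq nat.  Monomials form a k-basis of k_0<X>, and the product of
   monomials is concatenation. *)
Definition word := seq nat.

Definition perm_prod (p : nat) (u : 'I_p -> word) (s : 'S_p) : word :=
  flatten [seq u (s i) | i <- enum 'I_p].

(* coefficient of the monomial w in S_p(u_1,...,u_p) = \sum_s u_{s 1}...u_{s p}:
   since each summand is a basis monomial, this is the sum over s of
   (coefficient of w in the monomial perm_prod u s) = [perm_prod u s == w]. *)
Definition Sp_coef (k : nzRingType) (p : nat) (u : 'I_p -> word) (w : word) : k :=
  \sum_(s : 'S_p) ((perm_prod u s == w)%:R : k).

Definition wpow (w : word) (p : nat) : word := flatten (nseq p w).

From mathcomp Require Import all_boot all_order all_algebra all_fingroup.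
From mathcomp Require Import cyclic.
Set Implicit Arguments. Unset Strict Implicit. Unset Printing Implicit Defensive.
Import GRing.Theory.

(* Let c be the cyclic shift i |-> i + 1 of {0, ..., p-1}.  Since
   u_{s(c 0)} ... u_{s(c (p-1))} is a rotation of u_{s 0} ... u_{s (p-1)},
   left multiplication by the cyclic group <c>, of order p, preserves the set of
   permutations s whose product u_s lies in a rotation-closed set of words.
   That set is therefore a union of right cosets of <c>, so its size is
   divisible by p.  Rotating (xy)^p by one letter gives (yx)^p and back, so
   both the union and the intersection of the two sets of permutations counted
   by the coefficients are of this kind, and the sum of the coefficients is a
   multiple of p, hence 0 in k. *)

Lemma dvdn_card_mulg_stable (gT : finGroupType) (H : {group gT}) (A : {set gT}) :
  (H * A \subset A)%g -> #|H| %| #|A|.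
Proof.
move=> sHA_A; rewrite -(card_invg A).
have actsHA : [acts H, on A^-1%g | 'R].
  apply/actsP => a Ha t; rewrite /= !inE invMg.
  apply/idP/idP => [Ata | At]; last by apply: (subsetP sHA_A); rewrite mem_mulg ?groupV.
  by rewrite -[(t^-1)%g]mul1g -(mulgV a) -mulgA; apply: (subsetP sHA_A); rewrite mem_mulg.
rewrite (card_uniform_partition (n := #|H|) _ (orbit_partition actsHA)) ?dvdn_mull //.
by move=> _ /imsetP[t _ ->]; rewrite orbitR card_lcoset.
Qed.

Lemma rot1_closed_rot (T : Type) (P : pred (seq T)) :
  (forall w, P w -> P (rot 1 w)) -> forall m w, P w -> P (rot m w).
Proof.
move=> P_rot1; elim=> [|m IHm] w Pw; first by rewrite rot0.
have [lt_m_w | le_w_m] := ltnP m (size w); first by rewrite rotS // P_rot1 // IHm.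
by rewrite rot_oversize // ltnW.
Qed.

Lemma flatten_rot1 (T : Type) (l : seq (seq T)) :
  flatten (rot 1 l) = rot (size (head [::] l)) (flatten l).
Proof.
case: l => [|w l] /=; first by rewrite rot0.
by rewrite rot1_cons -cats1 flatten_cat /= cats0 rot_size_cat.
Qed.

Definition rot_perm n : 'S_n := perm (@ordS_inj n).

Lemma map_rot_perm (T : Type) n (f : 'I_n -> T) :
  [seq f (rot_perm n i) | i <- enum 'I_n] = rot 1 [seq f i | i <- enum 'I_n].
Proof.
case: n f => [|n] f; first by rewrite enum_ord0.
rewrite [in LHS]enum_ordSr [in RHS]enum_ordSl map_rcons /= rot1_cons -!map_comp.
congr rcons; last by rewrite permE; congr f; apply: val_inj; rewrite /= modnn.
apply: eq_map => i /=; rewrite permE; congr f.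
by apply: val_inj; rewrite /= modn_small // ltnS.
Qed.

Lemma rot_permX_val n j (i : 'I_n) : val ((rot_perm n ^+ j)%g i) = (i + j) %% n.
Proof.
elim: j => [|j IHj]; first by rewrite expg0 perm1 addn0 modn_small.
by rewrite expgSr permM permE /= IHj -addn1 modnDml addn1 addnS.
Qed.

Lemma order_rot_perm n : #[rot_perm n.+1]%g = n.+1.
Proof.
apply/eqP; rewrite eqn_dvd order_dvdn; apply/andP; split.
  by apply/eqP/permP => i; apply: val_inj; rewrite perm1 rot_permX_val modnDr modn_small.
have := rot_permX_val #[rot_perm n.+1]%g (ord0 : 'I_n.+1).
by rewrite expg_order perm1 add0n => /esym/eqP.
Qed.

Lemma perm_prod_rot_perm n (u : 'I_n.+1 -> word) (s : 'S_n.+1) :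
  perm_prod u (rot_perm n.+1 * s)%g = rot (size (u (s ord0))) (perm_prod u s).
Proof.
rewrite /perm_prod (eq_map (fun i => congr1 u (permM _ s i))).
by rewrite (map_rot_perm (u \o s)) flatten_rot1 enum_ordSl.
Qed.

Lemma dvdn_card_perm_prod n (u : 'I_n.+1 -> word) (P : pred word) :
  (forall w, P w -> P (rot 1 w)) ->
  n.+1 %| #|[set s : 'S_n.+1 | P (perm_prod u s)]|.
Proof.
move=> P_rot1; rewrite -{1}(order_rot_perm n) orderE.
apply: dvdn_card_mulg_stable; apply/subsetP => _ /mulsgP[a s /cycleP[j ->] Ps ->].
rewrite inE in Ps; rewrite inE; elim: j => [|j IHj]; first by rewrite expg0 mul1g.
by rewrite expgS -mulgA perm_prod_rot_perm; apply: rot1_closed_rot.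
Qed.

Lemma dvdn_card_perm_prod_rot_pair n (u : 'I_n.+1 -> word) (w1 w2 : word) :
  rot 1 w1 = w2 -> rot 1 w2 = w1 ->
  n.+1 %| #|[set s : 'S_n.+1 | perm_prod u s == w1]|
          + #|[set s : 'S_n.+1 | perm_prod u s == w2]|.
Proof.
move=> rot_w1 rot_w2; rewrite -cardsUI.
pose P_or w := (w == w1) || (w == w2); pose P_and w := (w == w1) && (w == w2).
rewrite (_ : _ :|: _ = [set s | P_or (perm_prod u s)]); last by apply/setP => s; rewrite !inE.
rewrite (_ : _ :&: _ = [set s | P_and (perm_prod u s)]); last by apply/setP => s; rewrite !inE.
apply: dvdn_add; apply: dvdn_card_perm_prod => w.
  by case/orP => /eqP ->; rewrite /P_or ?rot_w1 ?rot_w2 eqxx ?orbT.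
by case/andP => /eqP -> /eqP w12; rewrite /P_and rot_w1 -w12 eqxx.
Qed.

Lemma rot1_wpow (a b : nat) n : rot 1 (wpow [:: a; b] n.+1) = wpow [:: b; a] n.+1.
Proof.
rewrite /= rot1_cons rcons_cons; congr cons.
by elim: n => [|n IHn] //=; rewrite IHn.
Qed.

Local Open Scope ring_scope.

Lemma Sp_coefE (k : nzRingType) p (u : 'I_p -> word) w :
  Sp_coef k u w = #|[set s : 'S_p | perm_prod u s == w]|%:R.
Proof.
rewrite /Sp_coef -natr_sum -sum1_card [in RHS]big_mkcond /=.
by congr _%:R; apply: eq_bigr => s _; rewrite inE; case: (_ == _).
Qed.

Theorem lemma5p1 (p : nat) (k : fieldType) (hp : prime p) (hchar : p \in [pchar k])
  (x y : nat) (u : 'I_p -> word) (hu : forall i, u i != [::]) :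
  Sp_coef k u (wpow [:: x; y] p) + Sp_coef k u (wpow [:: y; x] p) = 0.
Proof.
rewrite !Sp_coefE -natrD; apply/eqP; rewrite -(dvdn_pcharf hchar).
case: p hp {hchar} u {hu} => [//|n] _ u.
by apply: dvdn_card_perm_prod_rot_pair; apply: rot1_wpow.
Qed.
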